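(* For every integer $n\ge 2$ and every $s\in\mathbb{N}$, $\mathrm{ML}(1,2,\ldots,n-1,ns)=\frac{s}{ns+1}$.
   Context: For a real number $x$, $\Vert x\Vert$ denotes the distance from $x$ to the nearest integer. For positive integers $v_1,\ldots,v_n$, the maximum loneliness is $\mathrm{ML}(v_1,\ldots,v_n)=\max_{t\in\mathbb{R}}\min_{1\le i\le n}\Vert t v_i\Vert$. Here $\mathbb{N}=\{1,2,3,\ldots\}$. *)

From Stdlib Require Import Reals List.
Open Scope R_scope.

(* ||x|| : distance from x to the nearest integer.
   Int_part x = up x - 1 is the floor of x. *)
Definition dist_nint (x : R) : R :=
  let f := x - IZR (Int_part x) in Rmin f (1 - f).

Definition min_loneliness (t : R) (v0 : nat) (rest : list nat) : R :=
  fold_left (fun acc v => Rmin acc (dist_nint (t * INR v))) rest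
            (dist_nint (t * INR v0)).

Definition is_ML (v0 : nat) (rest : list nat) (m : R) : Prop :=
  (exists t : R, min_loneliness t v0 rest = m) /\
  (forall t : R, min_loneliness t v0 rest <= m).

(* The speed list 1, 2, ..., n-1, n*s  (written as 1 :: (2..n-1 ++ [n*s])) *)
Definition speeds_tail (n s : nat) : list nat :=
  seq 2 (n - 2) ++ (n * s)%nat :: nil.

From Stdlib Require Import Reals List Lra Lia ZArith.
Open Scope R_scope.

(* Put d = s/(ns+1) and e = 1/(ns+1), so that n d + e = 1.  At t = d the speeds
   1, ..., n-1 stay at distance >= d from the integers and t ns = s - d, so the
   value d is attained.  Conversely, if ||t k|| > d for all k < n, the fractional
   parts of t, 2t, ..., nt are pairwise more than d apart (their differences are
   ||t (i - j)||); if moreover ||t n|| > e, they all fit in an open window of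
   length 1 - d - e = (n - 1) d, which is impossible.  Hence ||t n|| <= e and
   ||t ns|| <= s ||t n|| <= s e = d. *)

Lemma dist_nint_le_Rabs (z : R) (m : Z) : dist_nint z <= Rabs (z - IZR m).
Proof.
  unfold dist_nint; fold (frac_part z).
  pose proof (base_Int_part z) as [Hlo Hhi].
  destruct (Z_le_gt_dec m (Int_part z)) as [Hm | Hm].
  - apply IZR_le in Hm. rewrite Rabs_right by lra.
    unfold frac_part; apply Rle_trans with (z - IZR (Int_part z)); [apply Rmin_l | lra].
  - assert (IZR (Int_part z) + 1 <= IZR m) by (rewrite <- plus_IZR; apply IZR_le; lia).
    rewrite Rabs_left1 by lra.
    unfold frac_part; apply Rle_trans with (1 - (z - IZR (Int_part z))); [apply Rmin_r | lra].
Qed.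

Lemma dist_nint_eq_Rabs (z : R) : exists m : Z, dist_nint z = Rabs (z - IZR m).
Proof.
  unfold dist_nint; fold (frac_part z).
  pose proof (base_fp z) as [Hlo Hhi]; unfold frac_part in *.
  destruct (Rle_dec (z - IZR (Int_part z)) (1 - (z - IZR (Int_part z)))).
  - exists (Int_part z). rewrite Rmin_left, Rabs_right; lra.
  - exists (Int_part z + 1)%Z. rewrite Rmin_right, plus_IZR, Rabs_left1; lra.
Qed.

Lemma dist_nint_glb (z c : R) :
  (forall m : Z, c <= Rabs (z - IZR m)) -> c <= dist_nint z.
Proof. intros H. destruct (dist_nint_eq_Rabs z) as [m ->]. apply H. Qed.

Lemma dist_nint_ge_between (z c : R) (m : Z) :
  IZR m + c <= z <= IZR m + 1 - c -> c <= dist_nint z.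
Proof.
  intros Hz. apply dist_nint_glb. intros k.
  destruct (Z_le_gt_dec k m) as [Hk | Hk].
  - apply IZR_le in Hk. pose proof (RRle_abs (z - IZR k)). lra.
  - assert (IZR m + 1 <= IZR k) by (rewrite <- plus_IZR; apply IZR_le; lia).
    rewrite Rabs_minus_sym. pose proof (RRle_abs (IZR k - z)). lra.
Qed.

Lemma frac_part_between (z c : R) :
  c < dist_nint z -> c < frac_part z < 1 - c.
Proof.
  unfold dist_nint; fold (frac_part z). intros H.
  pose proof (Rmin_l (frac_part z) (1 - frac_part z)).
  pose proof (Rmin_r (frac_part z) (1 - frac_part z)). lra.
Qed.

Lemma dist_nint_sub_le_frac (x y : R) :
  dist_nint (x - y) <= Rabs (frac_part x - frac_part y).
Proof.
  unfold frac_part.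
  replace (x - IZR (Int_part x) - (y - IZR (Int_part y)))
    with (x - y - IZR (Int_part x - Int_part y)) by (rewrite minus_IZR; ring).
  apply dist_nint_le_Rabs.
Qed.

Lemma dist_nint_mul_nat (s : nat) (z : R) : dist_nint (INR s * z) <= INR s * dist_nint z.
Proof.
  destruct (dist_nint_eq_Rabs z) as [m ->].
  eapply Rle_trans; [apply (dist_nint_le_Rabs _ (Z.of_nat s * m)) |].
  rewrite mult_IZR, <- INR_IZR_INZ, <- Rmult_minus_distr_l, Rabs_mult, Rabs_right.
  - apply Rle_refl.
  - apply Rle_ge, pos_INR.
Qed.

Section MinLoneliness.
Variable t : R.
Let step (acc : R) (v : nat) : R := Rmin acc (dist_nint (t * INR v)).

Lemma fold_step_le_init (l : list nat) (a : R) : fold_left step l a <= a.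
Proof.
  revert a; induction l as [| v l IH]; intros a; simpl; [lra |].
  eapply Rle_trans; [apply IH | apply Rmin_l].
Qed.

Lemma fold_step_le_mem (l : list nat) (a : R) (v : nat) :
  In v l -> fold_left step l a <= dist_nint (t * INR v).
Proof.
  revert a; induction l as [| w l IH]; intros a Hv; simpl; [destruct Hv |].
  destruct Hv as [<- | Hv]; [| apply IH; exact Hv].
  eapply Rle_trans; [apply fold_step_le_init | apply Rmin_r].
Qed.

Lemma fold_step_glb (l : list nat) (a c : R) :
  c <= a -> (forall v, In v l -> c <= dist_nint (t * INR v)) -> c <= fold_left step l a.
Proof.
  revert a; induction l as [| w l IH]; intros a Ha Hl; simpl; [exact Ha |].
  apply IH; [apply Rmin_glb; [exact Ha | apply Hl; left; reflexivity] |].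
  intros v Hv; apply Hl; right; exact Hv.
Qed.

Lemma min_loneliness_le (v0 : nat) (rest : list nat) (v : nat) :
  In v (v0 :: rest) -> min_loneliness t v0 rest <= dist_nint (t * INR v).
Proof.
  intros [<- | Hv].
  - apply fold_step_le_init.
  - apply fold_step_le_mem; exact Hv.
Qed.

Lemma min_loneliness_glb (v0 : nat) (rest : list nat) (c : R) :
  (forall v, In v (v0 :: rest) -> c <= dist_nint (t * INR v)) ->
  c <= min_loneliness t v0 rest.
Proof.
  intros H. apply fold_step_glb; [apply H; left; reflexivity |].
  intros v Hv; apply H; right; exact Hv.
Qed.

End MinLoneliness.

Lemma exists_max_in_list {A : Type} (f : A -> R) (I : list A) :
  I <> nil -> exists i0, In i0 I /\ forall j, In j I -> f j <= f i0.
Proof.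
  induction I as [| i I IH]; intros HI; [congruence |].
  destruct I as [| k I].
  - exists i. split; [left; reflexivity |]. intros j [<- | []]; lra.
  - destruct IH as [i1 [Hi1 Hmax]]; [discriminate |].
    destruct (Rle_dec (f i) (f i1)).
    + exists i1. split; [right; exact Hi1 |].
      intros j [<- | Hj]; [lra | apply Hmax; exact Hj].
    + exists i. split; [left; reflexivity |].
      intros j [<- | Hj]; [lra | specialize (Hmax j Hj); lra].
Qed.

Lemma separated_points_span {A : Type} (f : A -> R) (d : R) (m : nat) :
  forall (I : list A) (a b : R), NoDup I -> length I = S m ->
  (forall i, In i I -> a < f i < b) ->
  (forall i j, In i I -> In j I -> i <> j -> d < Rabs (f i - f j)) ->
  INR m * d < b - a.
Proof.
  induction m as [| m IH]; intros I a b Hnd Hlen Hin Hsep.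
  - destruct I as [| i I]; [discriminate |].
    specialize (Hin i (or_introl eq_refl)). simpl; lra.
  - destruct (exists_max_in_list f I) as [i0 [Hi0 Hmax]]; [intros ->; discriminate |].
    destruct (in_split _ _ Hi0) as [l1 [l2 ->]].
    assert (Hrest : forall j, In j (l1 ++ l2) -> In j (l1 ++ i0 :: l2) /\ j <> i0).
    { intros j Hj. split.
      - apply in_app_or in Hj. apply in_or_app. destruct Hj; [left | right; right]; assumption.
      - intros ->. exact (NoDup_remove_2 _ _ _ Hnd Hj). }
    assert (Hspan : INR m * d < f i0 - d - a).
    { apply (IH (l1 ++ l2)).
      - exact (NoDup_remove_1 _ _ _ Hnd).
      - rewrite length_app in *. simpl in Hlen. lia.
      - intros i Hi. destruct (Hrest i Hi) as [HiI Hne].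
        split; [apply Hin; exact HiI |].
        pose proof (Hmax i HiI). pose proof (Hsep i i0 HiI Hi0 Hne) as Hd.
        rewrite Rabs_left1 in Hd by lra. lra.
      - intros i j Hi Hj. apply Hsep; [apply Hrest; exact Hi | apply Hrest; exact Hj]. }
    pose proof (Hin i0 Hi0). rewrite S_INR. lra.
Qed.

Lemma dist_nint_mul_le_of_separated (n : nat) (t d e : R) :
  (1 <= n)%nat -> e <= d < 1/2 -> INR n * d + e = 1 ->
  (forall k, (1 <= k <= n - 1)%nat -> d < dist_nint (t * INR k)) ->
  dist_nint (t * INR n) <= e.
Proof.
  intros Hn Hde Hsum Hsmall. apply Rnot_lt_le. intros Hlast.
  set (f := fun k : nat => frac_part (t * INR k)).
  assert (Hsep : forall i j, In i (seq 1 n) -> In j (seq 1 n) -> i <> j ->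
                             d < Rabs (f i - f j)).
  { assert (Hlt : forall i j, In i (seq 1 n) -> In j (seq 1 n) -> (j < i)%nat ->
                              d < Rabs (f i - f j)).
    { intros i j Hi Hj Hji. apply in_seq in Hi, Hj.
      eapply Rlt_le_trans; [apply (Hsmall (i - j)%nat); lia |].
      rewrite minus_INR, Rmult_minus_distr_l by lia.
      apply dist_nint_sub_le_frac. }
    intros i j Hi Hj Hij. assert (Hcmp : (i < j \/ j < i)%nat) by lia. destruct Hcmp.
    - rewrite Rabs_minus_sym. apply Hlt; assumption.
    - apply Hlt; assumption. }
  assert (Hinner : forall k, In k (seq 1 n) -> k <> n -> d < f k < 1 - d).
  { intros k Hk Hkn. apply in_seq in Hk. apply frac_part_between, Hsmall. lia. }
  pose proof (frac_part_between _ _ Hlast) as Hfn; fold (f n) in Hfn.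
  assert (Hlen : length (seq 1 n) = S (n - 1)) by (rewrite length_seq; lia).
  assert (HN : INR (n - 1) = INR n - 1) by (rewrite minus_INR by lia; reflexivity).
  (* the window is (e, 1 - d) if f n < 1/2, and (d, 1 - e) otherwise *)
  assert (Hwindow : exists a, forall k, In k (seq 1 n) -> a < f k < a + (1 - d - e)).
  { destruct (Rlt_dec (f n) (1/2)); [exists e | exists d];
      intros k Hk; destruct (Nat.eq_dec k n) as [-> | Hkn]; try lra;
      pose proof (Hinner k Hk Hkn); lra. }
  destruct Hwindow as [a Hwindow].
  pose proof (separated_points_span f d _ (seq 1 n) a _ (seq_NoDup n 1) Hlen Hwindow Hsep)
    as Hspan.
  rewrite HN in Hspan. lra.
Qed.

Section Speeds.
Variables n s : nat.
Hypothesis hn : (2 <= n)%nat.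
Hypothesis hs : (1 <= s)%nat.

Let d := INR s / (INR n * INR s + 1).
Let e := 1 / (INR n * INR s + 1).

Lemma in_speeds (v : nat) :
  In v (1%nat :: speeds_tail n s) <-> (1 <= v <= n - 1)%nat \/ v = (n * s)%nat.
Proof.
  unfold speeds_tail. simpl. rewrite in_app_iff, in_seq. simpl. lia.
Qed.

Lemma ML_value_arith :
  0 <= d /\ INR n * d <= 1 /\ INR n * d + e = 1 /\ e <= d < 1/2 /\ INR s * e = d /\
  d * (INR n * INR s) = INR s - d.
Proof.
  assert (HN : 2 <= INR n) by (apply (le_INR 2); exact hn).
  assert (HS : 1 <= INR s) by (apply (le_INR 1); exact hs).
  assert (HP : 0 < INR n * INR s + 1) by nra.
  unfold d, e, Rdiv. repeat split.
  all: try (apply Rmult_le_reg_r with (INR n * INR s + 1); [exact HP |]).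
  all: try (apply Rmult_lt_reg_r with (INR n * INR s + 1); [exact HP |]).
  all: field_simplify; try field; nra.
Qed.

Lemma min_loneliness_at_ML_value : min_loneliness d 1 (speeds_tail n s) = d.
Proof.
  destruct ML_value_arith as (Hd & HNd & _ & [_ Hd2] & _ & HdNS).
  apply Rle_antisym.
  - eapply Rle_trans; [apply (min_loneliness_le _ _ _ 1%nat); left; reflexivity |].
    eapply Rle_trans; [apply (dist_nint_le_Rabs _ 0) |].
    rewrite Rmult_1_r, Rminus_0_r, Rabs_right; lra.
  - apply min_loneliness_glb. intros v Hv. apply in_speeds in Hv as [Hv | ->].
    + apply (dist_nint_ge_between _ _ 0). simpl IZR.
      assert (1 <= INR v) by (apply (le_INR 1); lia).
      assert (INR v + 1 <= INR n) by (rewrite <- S_INR; apply le_INR; lia).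
      split; nra.
    + rewrite mult_INR, HdNS.
      apply (dist_nint_ge_between _ _ (Z.of_nat s - 1)).
      rewrite minus_IZR, <- INR_IZR_INZ. simpl IZR. lra.
Qed.

Lemma min_loneliness_speeds_le_ML_value (t : R) : min_loneliness t 1 (speeds_tail n s) <= d.
Proof.
  destruct ML_value_arith as (_ & _ & Hsum & Hde & HSe & _).
  apply Rnot_lt_le. intros Hgt.
  assert (Hfar : forall v, In v (1%nat :: speeds_tail n s) -> d < dist_nint (t * INR v)).
  { intros v Hv. eapply Rlt_le_trans; [exact Hgt | apply min_loneliness_le; exact Hv]. }
  assert (Hn : dist_nint (t * INR n) <= e).
  { apply (dist_nint_mul_le_of_separated n t d e); [lia | exact Hde | exact Hsum |].
    intros k Hk. apply Hfar, in_speeds. left; exact Hk. }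
  assert (Hns : dist_nint (t * INR (n * s)) <= d).
  { rewrite mult_INR. replace (t * (INR n * INR s)) with (INR s * (t * INR n)) by ring.
    eapply Rle_trans; [apply dist_nint_mul_nat |].
    rewrite <- HSe. apply Rmult_le_compat_l; [apply pos_INR | exact Hn]. }
  pose proof (Hfar (n * s)%nat (proj2 (in_speeds _) (or_intror eq_refl))). lra.
Qed.
End Speeds.

Theorem theorem5p1 (n s : nat) (hn : (2 <= n)%nat) (hs : (1 <= s)%nat) :
  is_ML 1 (speeds_tail n s) (INR s / (INR n * INR s + 1)).
Proof.
  split.
  - eexists. apply min_loneliness_at_ML_value; assumption.
  - apply min_loneliness_speeds_le_ML_value; assumption.
Qed.
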